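(* Let $r,p\ge0$ with $r+2p=n$, and $\mathbf t=(t_1,\dots,t_p)\in\mathbb C^p$ with all $t_i\ne0$. On the $W^n$-module $S(\mathbf t,0)$ all $u_k(1)$ act by zero, and $u_k(0)$ acts by $0$ if $k$ is odd or $k>2p$, and by the scalar $\sigma_{k/2}(t_1,\dots,t_p)$ if $k$ is even, where $\sigma_a$ is the $a$-th elementary symmetric polynomial.
   Context: For $m\ge0$, $U(\mathfrak h_m)$ is the superalgebra generated by odd $\xi_1,\dots,\xi_m$ with $\xi_i\xi_j+\xi_j\xi_i=0$ ($i\ne j$), $x_i=\xi_i^2$; it is the enveloping algebra of the Cartan subalgebra of $Q(m)$. $W^m\subset U(\mathfrak h_m)$ is the principal finite $W$-algebra of $Q(m)$ realized via the injective Harish-Chandra homomorphism, generated by $u_k(0),u_k(1)$ ($1\le k\le m$), the even and odd parts of $\sum_{1\le i_1<\dots<i_k\le m}\prod_{j=1}^{k}(x_{i_j}+(-1)^{k-j}\xi_{i_j})$ (ordered product). $W^2$ is generated by $\phi_0=\xi_1+\xi_2$, $\phi_1=x_2\xi_1-x_1\xi_2$, $z_0=x_1+x_2$, $z_1'=x_1x_2-\xi_1\xi_2$; $\Gamma_t$ is the $(1|0)$-dimensional $W^2$-module with $\phi_0,\phi_1,z_0$ acting by $0$ and $z_1'$ by $t$. The trivial $W^r$-module $\mathbb C$ is the restriction of the even one-dimensional $U(\mathfrak h_r)$-module on which all $\xi_i$ act by $0$. Via $U(\mathfrak h_n)\cong U(\mathfrak h_r)\otimes U(\mathfrak h_2)^{\otimes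 p}$ (super tensor product, consecutive blocks of $\xi$'s to successive factors) one has $W^n\subset W^r\otimes(W^2)^{\otimes p}$, and $S(\mathbf t,0)$ is the restriction to $W^n$ of the one-dimensional module $\mathbb C\otimes\Gamma_{t_1}\otimes\dots\otimes\Gamma_{t_p}$. *)

From HB Require Import structures.
From mathcomp Require Import all_boot all_order all_algebra all_field.
From mathcomp Require Import mpoly.
Set Implicit Arguments. Unset Strict Implicit. Unset Printing Implicit Defensive.
Import GRing.Theory.
Local Open Scope ring_scope.

(* Concrete model of U(h_m): an element is sum_S f(S) xi_S, where S ranges over
   subsets of {0..m-1}, xi_S = xi_{s_1} ... xi_{s_a} (s_1 < ... < s_a), and the
   coefficients f(S) are polynomials in the central even variables x_i = xi_i^2.
   The ground field C is algC. *)
Definition Uh (m : nat) := {ffun {set 'I_m} -> {mpoly algC[m]}}.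

Section Uh_ops.
Variable m : nat.

(* xi_S xi_T = uh_sign S T * (prod_{i in S cap T} x_i) * xi_{S symdiff T} *)
Definition uh_sign (S T : {set 'I_m}) : algC :=
  (-1) ^+ #|[set st : 'I_m * 'I_m | [&& st.1 \in S, st.2 \in T & (st.2 < st.1)%N]]|.

Definition uh_mul (f g : Uh m) : Uh m :=
  [ffun U => \sum_(S : {set 'I_m})
      \sum_(T : {set 'I_m} | (S :\: T) :|: (T :\: S) == U)
        uh_sign S T *: ((\prod_(i in S :&: T) 'X_i) * f S * g T)].

Definition uh_one : Uh m := [ffun S => (S == set0)%:R].
Definition uh_xi (i : 'I_m) : Uh m := [ffun S => (S == [set i])%:R].
Definition uh_x (i : 'I_m) : Uh m := [ffun S => (S == set0)%:R * 'X_i].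

(* versions indexed by a natural number (0-based); only used for i < m *)
Definition uh_xiN (i : nat) : Uh m :=
  match (insub i : option 'I_m) with Some j => uh_xi j | None => 0 end.
Definition uh_xN (i : nat) : Uh m :=
  match (insub i : option 'I_m) with Some j => uh_x j | None => 0 end.

(* even and odd parts (parity of xi_S is |S| mod 2, the x_i are even) *)
Definition uh_even (f : Uh m) : Uh m := [ffun S : {set 'I_m} => if odd #|S| then 0 else f S].
Definition uh_odd (f : Uh m) : Uh m := [ffun S : {set 'I_m} => if odd #|S| then f S else 0].

Definition uh_prod (s : seq 'I_m) (F : 'I_m -> Uh m) : Uh m :=
  foldr (fun i acc => uh_mul (F i) acc) uh_one s.

(* the j-th factor (j = 1 + position of i in the increasing enumeration of A)
   x_i + (-1)^(k-j) xi_i *)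
Definition u_factor (A : {set 'I_m}) (k : nat) (i : 'I_m) : Uh m :=
  uh_x i + ((-1) ^+ (k - (index i (enum A)).+1) : algC) *: uh_xi i.

Definition u_on (I : {set 'I_m}) (k : nat) : Uh m :=
  \sum_(A : {set 'I_m} | (A \subset I) && (#|A| == k)) uh_prod (enum A) (u_factor A k).

(* u_k(0), u_k(1) of W^m: even and odd parts of the full sum *)
Definition u0 (k : nat) : Uh m := uh_even (u_on setT k).
Definition u1 (k : nat) : Uh m := uh_odd (u_on setT k).

Inductive subalg (G : Uh m -> Prop) : Uh m -> Prop :=
| sa_gen g : G g -> subalg G g
| sa_one : subalg G uh_one
| sa_add a b : subalg G a -> subalg G b -> subalg G (a + b)
| sa_scale (c : algC) a : subalg G a -> subalg G (c *: a)
| sa_mul a b : subalg G a -> subalg G b -> subalg G (uh_mul a b).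

(* chi is a character (unital algebra homomorphism to C) of subalg G;
   this is exactly the datum of a (1|0)-dimensional module over subalg G *)
Definition char_on (G : Uh m -> Prop) (chi : Uh m -> algC) : Prop :=
  [/\ chi uh_one = 1,
      forall a b, subalg G a -> subalg G b -> chi (a + b) = chi a + chi b,
      forall c a, subalg G a -> chi (c *: a) = c * chi a &
      forall a b, subalg G a -> subalg G b -> chi (uh_mul a b) = chi a * chi b].

(* generators of the j-th copy of W^2, living in the variables a, a+1 *)
Definition phi0 (a : nat) : Uh m := uh_xiN a + uh_xiN a.+1.
Definition phi1 (a : nat) : Uh m :=
  uh_mul (uh_xN a.+1) (uh_xiN a) - uh_mul (uh_xN a) (uh_xiN a.+1).
Definition z0 (a : nat) : Uh m := uh_xN a + uh_xN a.+1.
Definition z1' (a : nat) : Uh m :=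
  uh_mul (uh_xN a) (uh_xN a.+1) - uh_mul (uh_xiN a) (uh_xiN a.+1).

Definition first_vars (r : nat) : {set 'I_m} := [set i : 'I_m | (i < r)%N].

(* generators of W^r (x) (W^2)^{(x) p}, embedded in U(h_m) = U(h_r) (x) U(h_2)^{(x)p}
   (consecutive blocks of variables) *)
Definition blockW_gens (r p : nat) : Uh m -> Prop := fun g =>
  (exists k, g = uh_even (u_on (first_vars r) k) \/ g = uh_odd (u_on (first_vars r) k))
  \/ (exists j : 'I_p, let a := (r + 2 * j)%N in
        [\/ g = phi0 a, g = phi1 a, g = z0 a | g = z1' a]).

(* chi is the character of the one-dimensional module C (x) Gamma_{t_1} (x) ... (x) Gamma_{t_p}
   of W^r (x) (W^2)^{(x)p}: trivial module on W^r (restriction of the U(h_r)-module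
   where all xi_i act by 0, i.e. evaluation of the constant term), and on the j-th
   copy of W^2: phi0, phi1, z0 act by 0 and z1' by t_j. *)
Definition S_t0_char (r p : nat) (t : 'I_p -> algC) (chi : Uh m -> algC) : Prop :=
  [/\ char_on (blockW_gens r p) chi,
      forall k, chi (uh_even (u_on (first_vars r) k))
                = mcoeff 0%MM (uh_even (u_on (first_vars r) k) set0),
      forall k, chi (uh_odd (u_on (first_vars r) k))
                = mcoeff 0%MM (uh_odd (u_on (first_vars r) k) set0) &
      forall j : 'I_p, let a := (r + 2 * j)%N in
        [/\ chi (phi0 a) = 0, chi (phi1 a) = 0, chi (z0 a) = 0 & chi (z1' a) = t j]].

End Uh_ops.

Definition esym_t (p : nat) (t : 'I_p -> algC) (a : nat) : algC :=
  \sum_(A : {set 'I_p} | #|A| == a) \prod_(i in A) t i.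

From HB Require Import structures.
From mathcomp Require Import all_boot all_order all_algebra all_field.
From mathcomp Require Import mpoly.
From mathcomp Require Import zify.
Set Implicit Arguments. Unset Strict Implicit. Unset Printing Implicit Defensive.
Import GRing.Theory Num.Theory.
Local Open Scope ring_scope.

(* Write u^I_k[c] for the sum defining u_k over the variables in I in which the
   factor x_i +- xi_i of a k-set A carries the sign (-1)^(c + #{a in A | a > i});
   u^I_k[0] is the defining sum of u_k, and changing c by one flips the sign of
   the odd part, so the even and odd parts of u_k are (u_k[0] +- u_k[1]) / 2.
   For consecutive blocks B < C of variables no odd generators have to be
   reordered, which gives the coproduct rule
     u^(B u C)_k[c] = sum_a u^B_a[c + k - a] u^C_(k-a)[c].
   On the pair of variables of the j-th copy of W^2 we have u_1[c] = z_0 +- phi_0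
   and u_2[c] = z_1' -+ phi_1, acting by 0 and t_j, i.e. by the coefficients of
   1 + t_j X^2, while on the first r variables only u_0 acts nontrivially.  Hence
   u_k[c] acts by the X^k-coefficient of prod_j (1 + t_j X^2) for both values of
   c: the odd part of u_k acts by 0 and the even part by sigma_(k/2)(t). *)

Section SubsetSums.
Variables (T : finType) (V : nmodType).
Implicit Types B C A : {set T}.

Lemma setU_split_disjoint B C (A1 A2 : {set T}) :
  [disjoint B & C] -> A1 \subset B -> A2 \subset C ->
  [/\ (A1 :|: A2) :&: B = A1, (A1 :|: A2) :&: C = A2 & #|A1 :|: A2| = (#|A1| + #|A2|)%N].
Proof.
move=> dBC sA1B sA2C; have dCB : [disjoint C & B] by rewrite disjoint_sym.
rewrite cardsU (disjoint_setI0 (disjointWl sA1B (disjointWr sA2C dBC))) cards0 subn0.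
rewrite !setIUl (disjoint_setI0 (disjointWl sA2C dCB)) (disjoint_setI0 (disjointWl sA1B dBC)).
by rewrite setU0 set0U (setIidPl sA1B) (setIidPl sA2C).
Qed.

Lemma eq_setU_split B C (S1 S2 : {set T}) A :
  [disjoint B & C] -> S1 \subset B -> S2 \subset C ->
  (S1 :|: S2 == A) = [&& S1 == A :&: B, S2 == A :&: C & A \subset B :|: C].
Proof.
move=> dBC sS1B sS2C; have [eB eC _] := setU_split_disjoint dBC sS1B sS2C.
apply/eqP/and3P => [<-|[/eqP-> /eqP-> sABC]]; first by rewrite eB eC setUSS.
by rewrite -setIUr (setIidPl sABC).
Qed.

Lemma sum_card_split k (P Q : pred {set T}) (F : {set T} -> {set T} -> V) :
  \sum_(a < k.+1) \sum_(A1 | P A1 && (#|A1| == a))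
      \sum_(A2 | Q A2 && (#|A2| == k - a)%N) F A1 A2 =
  \sum_(A1 | P A1) \sum_(A2 | Q A2 && (#|A1| + #|A2| == k)%N) F A1 A2.
Proof.
rewrite (exchange_big_dep P) => [|a A1 _ /andP[] //]; apply: eq_bigr => A1 PA1 /=.
have [lt_A1k | le_kA1] := ltnP #|A1| k.+1.
  rewrite (big_pred1 (Ordinal lt_A1k)) => [|a]; last by rewrite PA1 /= -val_eqE eq_sym.
  by apply: eq_bigl => A2; congr (_ && _); apply/eqP/eqP => /=; lia.
rewrite !big_pred0 // => [A2 | a]; last by rewrite PA1; apply/eqP; have := ltn_ord a; lia.
by apply/negbTE/negP => /andP[_ /eqP]; lia.
Qed.

Lemma sum_subsets_setU B C k (F : {set T} -> V) : [disjoint B & C] ->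
  \sum_(A : {set T} | (A \subset B :|: C) && (#|A| == k)) F A =
  \sum_(a < k.+1) \sum_(A1 : {set T} | (A1 \subset B) && (#|A1| == a))
      \sum_(A2 : {set T} | (A2 \subset C) && (#|A2| == k - a)%N) F (A1 :|: A2).
Proof.
move=> dBC; rewrite sum_card_split pair_big_dep /=.
rewrite (reindex_onto (fun p => p.1 :|: p.2) (fun A => (A :&: B, A :&: C))) /=; last first.
  by move=> A /andP[sABC _]; rewrite -setIUr (setIidPl sABC).
apply: eq_bigl => -[A1 A2] /=; rewrite xpair_eqE.
have [sA1B|nA1B] := boolP (A1 \subset B); last first.
  by rewrite [_ :&: B == A1](contraNF _ nA1B) ?andbF // => /eqP <-; rewrite subsetIr.
have [sA2C|nA2C] := boolP (A2 \subset C); last first.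
  by rewrite [_ :&: C == A2](contraNF _ nA2C) ?andbF // => /eqP <-; rewrite subsetIr.
have [-> -> ->] := setU_split_disjoint dBC sA1B sA2C.
by rewrite setUSS // !eqxx !andbT.
Qed.

End SubsetSums.

Section UhAlgebra.
Variable m : nat.
Implicit Types (f g : Uh m) (A B C I S U : {set 'I_m}).

Lemma uh_mulDl f1 f2 g : uh_mul (f1 + f2) g = uh_mul f1 g + uh_mul f2 g.
Proof.
apply/ffunP => U; rewrite !ffunE -big_split; apply: eq_bigr => S _.
rewrite -big_split; apply: eq_bigr => T _.
by rewrite ffunE mulrDr mulrDl scalerDr.
Qed.

Lemma uh_mulDr f g1 g2 : uh_mul f (g1 + g2) = uh_mul f g1 + uh_mul f g2.
Proof.
apply/ffunP => U; rewrite !ffunE -big_split; apply: eq_bigr => S _.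
rewrite -big_split; apply: eq_bigr => T _.
by rewrite ffunE mulrDr scalerDr.
Qed.

Lemma uh_mulZl a f g : uh_mul (a *: f) g = a *: uh_mul f g.
Proof.
apply/ffunP => U; rewrite !ffunE scaler_sumr; apply: eq_bigr => S _.
rewrite scaler_sumr; apply: eq_bigr => T _.
by rewrite ffunE -scalerAr -scalerAl !scalerA mulrC.
Qed.

Lemma uh_mulZr a f g : uh_mul f (a *: g) = a *: uh_mul f g.
Proof.
apply/ffunP => U; rewrite !ffunE scaler_sumr; apply: eq_bigr => S _.
rewrite scaler_sumr; apply: eq_bigr => T _.
by rewrite ffunE -scalerAr !scalerA mulrC.
Qed.

Lemma uh_mul0l g : uh_mul 0 g = 0.
Proof. by have := uh_mulZl 0 0 g; rewrite !scale0r. Qed.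

Lemma uh_mul0r f : uh_mul f 0 = 0.
Proof. by have := uh_mulZr 0 f 0; rewrite !scale0r. Qed.

Lemma uh_mul_suml (J : Type) (r : seq J) (P : pred J) (F : J -> Uh m) g :
  uh_mul (\sum_(j <- r | P j) F j) g = \sum_(j <- r | P j) uh_mul (F j) g.
Proof.
by apply: (big_morph (fun f => uh_mul f g)) => [f1 f2|]; rewrite ?uh_mulDl ?uh_mul0l.
Qed.

Lemma uh_mul_sumr (J : Type) (r : seq J) (P : pred J) (F : J -> Uh m) f :
  uh_mul f (\sum_(j <- r | P j) F j) = \sum_(j <- r | P j) uh_mul f (F j).
Proof.
by apply: (big_morph (fun g => uh_mul f g)) => [g1 g2|]; rewrite ?uh_mulDr ?uh_mul0r.
Qed.

Definition supported f B := forall S, ~~ (S \subset B) -> f S = 0.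

Definition before B C := forall i j, i \in B -> j \in C -> (i < j)%N.

Lemma before_disjoint B C : before B C -> [disjoint B & C].
Proof.
move=> bBC; rewrite -setI_eq0; apply/eqP/setP => x; rewrite !inE.
by apply/negbTE/andP => -[xB xC]; have := bBC _ _ xB xC; rewrite ltnn.
Qed.

Lemma before_subset B C B' C' : before B C -> B' \subset B -> C' \subset C -> before B' C'.
Proof. by move=> bBC sB sC i j /(subsetP sB) iB /(subsetP sC); apply: bBC iB. Qed.

Lemma before_set0 B : before B set0.
Proof. by move=> i j _; rewrite inE. Qed.

Lemma set0_before B : before set0 B.
Proof. by move=> i j; rewrite inE. Qed.

Lemma uh_sign_before S T : before S T -> uh_sign S T = 1.
Proof.
move=> bST; rewrite /uh_sign (_ : [set st | _] = set0) ?cards0 //.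
apply/setP => -[i j]; rewrite !inE /=; apply/negbTE/and3P => -[iS jT].
by rewrite ltnNge (ltnW (bST _ _ iS jT)).
Qed.

Lemma uh_mul_before f g B C : supported f B -> supported g C -> before B C ->
  forall U, uh_mul f g U = if U \subset B :|: C then f (U :&: B) * g (U :&: C) else 0.
Proof.
move=> fB gC bBC U; have dBC := before_disjoint bBC; rewrite ffunE.
transitivity (\sum_(S : {set 'I_m}) \sum_(T : {set 'I_m})
  if [&& S == U :&: B, T == U :&: C & U \subset B :|: C] then f S * g T else 0).
  apply: eq_bigr => S _; rewrite big_mkcond; apply: eq_bigr => T _.
  have [sSB|nSB] := boolP (S \subset B); last first.
    by rewrite fB // mulr0 !mul0r scaler0 !if_same.
  have [sTC|nTC] := boolP (T \subset C); last first.
    by rewrite gC // !mulr0 scaler0 !if_same.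
  have bST := before_subset bBC sSB sTC; have dST := before_disjoint bST.
  have dTS : [disjoint T & S] by rewrite disjoint_sym.
  rewrite uh_sign_before // scale1r (disjoint_setI0 dST) big_set0.
  by rewrite mul1r (setDidPl dST) (setDidPl dTS) (eq_setU_split U dBC sSB sTC).
rewrite (bigD1 (U :&: B)) //= [X in _ + X]big1 => [|S /negbTE nS]; last first.
  by rewrite big1 // => T _; rewrite nS.
rewrite addr0 (bigD1 (U :&: C)) //= [X in _ + X]big1 => [|T /negbTE nT]; last first.
  by rewrite nT andbF.
by rewrite !eqxx addr0.
Qed.

Lemma supported_setT f : supported f setT.
Proof. by move=> S; rewrite subsetT. Qed.

Lemma supported_one B : supported (uh_one m) B.
Proof. by move=> S nSB; rewrite ffunE; case: eqP nSB => // ->; rewrite sub0set. Qed.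

Lemma supported_x i B : supported (uh_x i) B.
Proof. by move=> S nSB; rewrite ffunE; case: eqP nSB => [->|]; rewrite ?sub0set ?mul0r. Qed.

Lemma supported_xi i B : i \in B -> supported (uh_xi i) B.
Proof. by move=> iB S nSB; rewrite ffunE; case: eqP nSB => // ->; rewrite sub1set iB. Qed.

Lemma supported_add f g B : supported f B -> supported g B -> supported (f + g) B.
Proof. by move=> fB gB S nSB; rewrite ffunE fB // gB // addr0. Qed.

Lemma supported_scale a f B : supported f B -> supported (a *: f) B.
Proof. by move=> fB S nSB; rewrite ffunE fB // scaler0. Qed.

Lemma uh_mul_supported0l f g U : supported f set0 -> uh_mul f g U = f set0 * g U.
Proof.
move=> f0; rewrite (uh_mul_before f0 (supported_setT g) (@set0_before setT)).
by rewrite set0U subsetT setIT setI0.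
Qed.

Lemma uh_mul_supported0r f g U : supported g set0 -> uh_mul f g U = f U * g set0.
Proof.
move=> g0; rewrite (uh_mul_before (supported_setT f) g0 (@before_set0 setT)).
by rewrite setU0 subsetT setIT setI0.
Qed.

Lemma uh_mul1r f : uh_mul (uh_one m) f = f.
Proof.
apply/ffunP => U; rewrite uh_mul_supported0l; last exact: supported_one.
by rewrite ffunE eqxx mul1r.
Qed.

Lemma uh_mulr1 f : uh_mul f (uh_one m) = f.
Proof.
apply/ffunP => U; rewrite uh_mul_supported0r; last exact: supported_one.
by rewrite ffunE eqxx mulr1.
Qed.

Lemma uh_mulC_supported0 f g : supported g set0 -> uh_mul f g = uh_mul g f.
Proof.
by move=> g0; apply/ffunP => U; rewrite uh_mul_supported0r // uh_mul_supported0l // mulrC.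
Qed.

Definition ord_ltn : rel 'I_m := relpre val ltn.

Lemma ord_ltn_trans : transitive ord_ltn.
Proof. by move=> j i k; apply: ltn_trans. Qed.

Lemma sorted_enum_ord_ltn (A : {set 'I_m}) : sorted ord_ltn (enum A).
Proof.
rewrite /ord_ltn -sorted_map -[enum _](eq_filter (mem_enum _)).
rewrite -(eq_filter (mem_map val_inj _)) -filter_map.
by rewrite (sorted_filter ltn_trans) // unlock val_ord_enum iota_ltn_sorted.
Qed.

Lemma uh_prod_coef (s : seq 'I_m) (F : 'I_m -> Uh m) :
  sorted ord_ltn s -> (forall i, supported (F i) [set i]) -> forall U,
  uh_prod s F U = if U \subset [set x in s]
                  then \prod_(i <- s) F i (if i \in U then [set i] else set0) else 0.
Proof.
move=> + Fi; elim: s => [|i s IHs] s_sorted U.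
  rewrite /= /uh_one ffunE big_nil (_ : [set x in [::]] = set0) ?subset0.
    by case: (U == set0).
  by apply/setP => x; rewrite !inE.
have lt_s := order_path_min ord_ltn_trans s_sorted.
have {}IHs := IHs (path_sorted s_sorted).
have supp_s : supported (uh_prod s F) [set x in s] by move=> S nS; rewrite IHs (negbTE nS).
have bis : before [set i] [set x in s].
  by move=> a b; rewrite !inE => /eqP-> bs; apply: (allP lt_s).
rewrite /= (uh_mul_before (Fi i) supp_s bis) (_ : [set i] :|: _ = [set x in i :: s]); last first.
  by apply/setP => x; rewrite !inE.
case: ifP => // _; rewrite IHs subsetIr big_cons; congr (F i _ * _).
  apply/setP => x; rewrite !inE; case: ifP => iU; rewrite ?inE;
  by case: eqP => [->|]; rewrite ?iU ?andbF ?andbT.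
by apply: eq_big_seq => j js; rewrite !inE js andbT.
Qed.

Lemma eq_in_uh_prod (s : seq 'I_m) (F G : 'I_m -> Uh m) :
  {in s, F =1 G} -> uh_prod s F = uh_prod s G.
Proof.
elim: s => //= a s IHs FG; rewrite FG ?mem_head // IHs // => x xs.
by apply: FG; rewrite inE xs orbT.
Qed.

Lemma index_add_count_gt (s : seq 'I_m) (i : 'I_m) : sorted ord_ltn s -> i \in s ->
  (index i s + count (fun a : 'I_m => (i < a)%N) s = (size s).-1)%N.
Proof.
elim: s => //= a s IHs s_sorted; have lt_s := order_path_min ord_ltn_trans s_sorted.
rewrite inE; have [<- _|ne_ai /= i_s] := eqVneq a i.
  by rewrite ltnn /= -(count_predT s); apply: eq_in_count => x /(allP lt_s).
have lt_ai : (a < i)%N := allP lt_s i i_s.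
have := IHs (path_sorted s_sorted) i_s; rewrite ltnNge (ltnW lt_ai).
by case: s i_s {IHs s_sorted lt_s} => //= *; lia.
Qed.

Definition n_after (A : {set 'I_m}) (i : 'I_m) : nat := #|[set a in A | (i < a)%N]|.

(* For c = 0 and i the j-th element of the k-set A the sign is (-1)^(k - j), as
   in u_k. *)
Definition twist_factor A (c : nat) (i : 'I_m) : Uh m :=
  uh_x i + ((-1) ^+ (c + n_after A i) : algC) *: uh_xi i.

Definition twist_prod A (c : nat) : Uh m := uh_prod (enum A) (twist_factor A c).

Definition u_twist I (k c : nat) : Uh m :=
  \sum_(A : {set 'I_m} | (A \subset I) && (#|A| == k)) twist_prod A c.

Lemma u_on_twist I k : u_on I k = u_twist I k 0.
Proof.
apply: eq_bigr => A /andP[_ /eqP cardA]; apply: eq_in_uh_prod => i; rewrite mem_enum => iA.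
congr (_ + (-1) ^+ _ *: _); rewrite add0n.
have := index_add_count_gt (sorted_enum_ord_ltn A) (_ : i \in enum A).
rewrite mem_enum -cardE cardA => /(_ iA).
suff -> : n_after A i = count (fun a : 'I_m => (i < a)%N) (enum A) by lia.
by rewrite /n_after -sum1_count big_enum_cond -sum1_card; apply: eq_bigl => x; rewrite !inE.
Qed.

Lemma twist_factor_coef A c i U :
  twist_factor A c i (if i \in U then [set i] else set0) =
  if i \in U then ((-1) ^+ (c + n_after A i) : algC) *: 1 else 'X_i.
Proof.
have i_ne0 : ([set i] == set0) = false by rewrite -cards_eq0 cards1.
rewrite !ffunE; case: ifP => _; first by rewrite i_ne0 eqxx mul0r add0r.
by rewrite eqxx eq_sym i_ne0 mul1r scaler0 addr0.
Qed.

Lemma supported_twist_factor A c i : supported (twist_factor A c i) [set i].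
Proof.
by apply: supported_add; [apply: supported_x | apply/supported_scale/supported_xi/set11].
Qed.

Lemma twist_prod_coef A c U : twist_prod A c U =
  if U \subset A
  then \prod_(i in A) (if i \in U then ((-1) ^+ (c + n_after A i) : algC) *: 1 else 'X_i)
  else 0.
Proof.
rewrite /twist_prod uh_prod_coef ?sorted_enum_ord_ltn //; last exact: supported_twist_factor.
by rewrite set_enum big_enum; under eq_bigr do rewrite twist_factor_coef.
Qed.

Lemma supported_twist_prod A c : supported (twist_prod A c) A.
Proof. by move=> S nSA; rewrite twist_prod_coef (negbTE nSA). Qed.

Lemma twist_prod_setU A1 A2 c : before A1 A2 ->
  uh_mul (twist_prod A1 (c + #|A2|)) (twist_prod A2 c) = twist_prod (A1 :|: A2) c.
Proof.
move=> bA; have dA := before_disjoint bA.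
apply/ffunP => U.
rewrite (uh_mul_before (@supported_twist_prod A1 _) (@supported_twist_prod A2 _) bA).
rewrite !twist_prod_coef; case: ifP => // _; rewrite !subsetIr.
rewrite [RHS](eq_bigl [predU A1 & A2]) => [|i]; last by rewrite !inE.
rewrite bigU //=; congr (_ * _).
  apply: eq_bigr => i iA1; rewrite inE iA1 andbT; case: ifP => // _.
  rewrite /n_after (_ : [set a in A1 :|: A2 | _] = [set a in A1 | (i < a)%N] :|: A2).
    rewrite cardsU (disjoint_setI0 (disjointWl _ dA)) ?cards0 ?subn0.
      by rewrite -addnA [(#|_| + #|A2|)%N]addnC.
    by apply/subsetP => x; rewrite inE => /andP[].
  apply/setP => x; rewrite !inE; case: (boolP (x \in A2)) => xA2; rewrite ?orbF ?orbT //.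
  by rewrite (bA _ _ iA1 xA2).
apply: eq_bigr => i iA2; rewrite inE iA2 andbT; case: ifP => // _.
congr (_ ^+ (_ + _) *: _); apply: eq_card => x; rewrite !inE.
by case: (boolP (x \in A1)) => //= xA1; rewrite ltnNge (ltnW (bA _ _ xA1 iA2)) andbF.
Qed.

Lemma u_twist_split B C k c : before B C ->
  u_twist (B :|: C) k c =
  \sum_(a < k.+1) uh_mul (u_twist B a (c + (k - a))%N) (u_twist C (k - a)%N c).
Proof.
move=> bBC; rewrite /u_twist sum_subsets_setU; last exact: before_disjoint.
apply: eq_bigr => a _.
rewrite uh_mul_suml; apply: eq_bigr => A1 /andP[sA1B _]; rewrite uh_mul_sumr.
apply: eq_bigr => A2 /andP[sA2C /eqP <-].
by rewrite twist_prod_setU //; apply: before_subset bBC sA1B sA2C.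
Qed.

Lemma twist_prod_sign A c U :
  twist_prod A c U = ((-1) ^+ (c * #|U|) : algC) *: twist_prod A 0 U.
Proof.
rewrite !twist_prod_coef; case: ifP => sUA; last by rewrite scaler0.
rewrite (eq_bigr (fun i => (if i \in U then (-1) ^+ c else 1) *:
    (if i \in U then ((-1) ^+ (0 + n_after A i) : algC) *: 1 else 'X_i))); last first.
  by move=> i _; case: ifP => _; rewrite ?scale1r // scalerA exprD.
rewrite scaler_prod -big_mkcondr prodr_const exprM; congr (_ ^+ _ *: _).
by apply: eq_card => i; rewrite unfold_in /= andb_idl // => /(subsetP sUA).
Qed.

Lemma u_twist_parts I k c :
  u_twist I k c = uh_even (u_twist I k 0) + ((-1) ^+ c : algC) *: uh_odd (u_twist I k 0).
Proof.
apply/ffunP => U; rewrite !ffunE !sum_ffunE.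
under eq_bigr do rewrite twist_prod_sign; rewrite -scaler_sumr.
rewrite -signr_odd oddM; case: (odd #|U|); rewrite ?andbT ?andbF ?signr_odd.
  by rewrite add0r.
by rewrite scale1r scaler0 addr0.
Qed.

Lemma u_twist_set0 b c : u_twist set0 b c = (b == 0)%:R *: uh_one m.
Proof.
rewrite /u_twist; case: b => [|b].
  rewrite (big_pred1 set0) => [|A]; last by rewrite subset0 cards_eq0 andbb.
  by rewrite /twist_prod enum_set0 scale1r.
by rewrite big_pred0 ?scale0r // => A; rewrite subset0; case: eqP => // ->; rewrite cards0.
Qed.

Lemma u_twist_set1 i b c : u_twist [set i] b c =
  if b == 0 then uh_one m
  else if b == 1 then uh_x i + ((-1) ^+ c : algC) *: uh_xi i else 0.
Proof.
rewrite /u_twist; case: b => [|[|b]] /=.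
- rewrite (big_pred1 set0) => [|A]; last first.
    by rewrite cards_eq0 andb_idl // => /eqP->; rewrite sub0set.
  by rewrite /twist_prod enum_set0.
- rewrite (big_pred1 [set i]) => [|A]; last first.
    rewrite subset1 /=; have [->|_] := eqVneq A [set i]; first by rewrite cards1 eqxx.
    by case: eqP => // ->; rewrite cards0.
  rewrite /twist_prod enum_set1 /= uh_mulr1 /twist_factor /n_after.
  rewrite (_ : [set a in [set i] | _] = set0) ?cards0 ?addn0 //.
  by apply/setP => a; rewrite !inE; case: eqP => // ->; rewrite ltnn.
- rewrite big_pred0 // => A; rewrite subset1; case: eqP => [->|_] /=; first by rewrite cards1.
  by case: eqP => // ->; rewrite cards0.
Qed.

Lemma u_twist_pair (i0 i1 : 'I_m) (b c : nat) : (i0 < i1)%N ->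
  let s := ((-1) ^+ c : algC) in
  u_twist [set i0; i1] b c =
  if b == 0 then uh_one m
  else if b == 1 then (uh_x i0 + uh_x i1) + s *: (uh_xi i0 + uh_xi i1)
  else if b == 2 then (uh_mul (uh_x i0) (uh_x i1) - uh_mul (uh_xi i0) (uh_xi i1))
                      - s *: (uh_mul (uh_x i1) (uh_xi i0) - uh_mul (uh_x i0) (uh_xi i1))
  else 0.
Proof.
move=> lt_i01 s.
have b01 : before [set i0] [set i1] by move=> x y; rewrite !inE => /eqP-> /eqP->.
rewrite u_twist_split //; case: b => [|[|[|b]]] /=.
- by rewrite big_ord1 !u_twist_set1 uh_mul1r.
- rewrite !big_ord_recl big_ord0 /= subn0 subnn addn0 !u_twist_set1 /= uh_mul1r uh_mulr1.
  by rewrite addr0 -/s scalerDr [LHS]addrC addrACA.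
- rewrite !big_ord_recl big_ord0 /= !u_twist_set1 /= uh_mul0l uh_mul0r add0r !addr0.
  rewrite uh_mulDl !uh_mulDr !uh_mulZl !uh_mulZr.
  rewrite (uh_mulC_supported0 (uh_xi i0) (@supported_x i1 set0)).
  have -> : ((-1) ^+ (c + 1) : algC) = - s by rewrite /s addn1 exprS mulN1r.
  rewrite -/s scalerA mulNr -expr2 sqrr_sign scaleN1r !scaleNr.
  by rewrite scalerBr opprB [- (s *: _) - _]addrC addrACA.
- rewrite big1 // => a _; rewrite !u_twist_set1.
  by case: a => -[|[|a]] /= lt_a; rewrite ?uh_mul0l ?uh_mul0r //; case: b lt_a.
Qed.

End UhAlgebra.

Lemma uh_xiN_ord m (i : 'I_m) : uh_xiN m i = uh_xi i.
Proof. by rewrite /uh_xiN valK. Qed.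

Lemma uh_xN_ord m (i : 'I_m) : uh_xN m i = uh_x i.
Proof. by rewrite /uh_xN valK. Qed.

Lemma mcoeff0_prodX (R : nzRingType) m (A : {set 'I_m}) :
  mcoeff 0%MM (\prod_(i in A) 'X_i : {mpoly R[m]}) = (A == set0)%:R.
Proof.
rewrite mprodXE mcoeffX -mdeg_eq0 mdeg_sum.
by rewrite (eq_bigr (fun _ => 1%N)) => [|i _]; [rewrite sum1_card cards_eq0 | exact: mdeg1].
Qed.

Lemma u_twist_const_coef m (I : {set 'I_m}) k :
  mcoeff 0%MM (u_twist I k 0 set0) = (k == 0)%:R.
Proof.
rewrite /u_twist sum_ffunE raddf_sum (eq_bigr (fun A => (A == set0)%:R)) => [|A _]; last first.
  rewrite twist_prod_coef sub0set (eq_bigr (fun i => 'X_i)) => [|i _]; last by rewrite inE.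
  exact: mcoeff0_prodX.
case: k => [|k].
  rewrite (big_pred1 set0) ?eqxx // => A.
  by rewrite cards_eq0 andb_idl // => /eqP->; rewrite sub0set.
by rewrite big1 // => A /andP[_ /eqP cardA]; rewrite -cards_eq0 cardA.
Qed.

Lemma coef_prod_esym p (t : 'I_p -> algC) k :
  (\prod_(i < p) (1 + (t i)%:P * 'X^2))`_k =
  if odd k || (2 * p < k)%N then 0 else esym_t t k./2.
Proof.
under eq_bigr do rewrite addrC.
rewrite bigA_distr coef_sum.
under eq_bigr => J _ do rewrite -big_mkcond /= big_split /= -rmorph_prod prodr_const -exprM
  coefCM coefXn.
have cardJ (J : {set 'I_p}) : (#|J| <= p)%N by rewrite -[X in (_ <= X)%N](card_ord p) max_card.
case: ifP => [k_out | /norP[k_even k_le]].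
  rewrite big1 // => J _; case: eqP => [k2J|]; last by rewrite mulr0.
  by move: k_out; rewrite k2J oddM /= ltn_mul2l /= ltnNge cardJ.
rewrite /esym_t [RHS]big_mkcond; apply: eq_bigr => J _.
have -> : (k == 2 * #|J|)%N = (#|J| == k./2).
  by have := odd_double_half k; rewrite (negbTE k_even) add0n => ek; apply/eqP/eqP; lia.
by case: eqP; rewrite ?mulr1 ?mulr0.
Qed.

Section CharacterValues.
Variables (m : nat) (G : Uh m -> Prop) (chi : Uh m -> algC).
Hypothesis chiG : char_on G chi.

Definition acts_by (a : Uh m) (x : algC) := subalg G a /\ chi a = x.

Lemma acts_by_gen g x : G g -> chi g = x -> acts_by g x.
Proof. by split; first exact: sa_gen. Qed.

Lemma acts_by1 : acts_by (uh_one m) 1.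
Proof. by split; [exact: sa_one | case: chiG]. Qed.

Lemma acts_byD a b x y : acts_by a x -> acts_by b y -> acts_by (a + b) (x + y).
Proof. by case: chiG => _ chiD _ _ [Ga <-] [Gb <-]; split; [exact: sa_add | exact: chiD]. Qed.

Lemma acts_byZ c a x : acts_by a x -> acts_by (c *: a) (c * x).
Proof. by case: chiG => _ _ chiZ _ [Ga <-]; split; [exact: sa_scale | exact: chiZ]. Qed.

Lemma acts_byM a b x y : acts_by a x -> acts_by b y -> acts_by (uh_mul a b) (x * y).
Proof. by case: chiG => _ _ _ chiM [Ga <-] [Gb <-]; split; [exact: sa_mul | exact: chiM]. Qed.

Lemma acts_by0 : acts_by 0 0.
Proof. by have := acts_byZ 0 acts_by1; rewrite scale0r mul0r. Qed.

Lemma acts_by_sum (J : Type) (r : seq J) (P : pred J) (F : J -> Uh m) (y : J -> algC) :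
  (forall j, P j -> acts_by (F j) (y j)) ->
  acts_by (\sum_(j <- r | P j) F j) (\sum_(j <- r | P j) y j).
Proof.
move=> Fy; elim: r => [|j r IHr]; rewrite ?big_nil ?big_cons; first exact: acts_by0.
by case: ifP => // Pj; apply: acts_byD (Fy j Pj) IHr.
Qed.

Lemma acts_by_parts I k x : (forall c, acts_by (u_twist I k c) x) ->
  chi (uh_even (u_twist I k 0)) = x /\ chi (uh_odd (u_twist I k 0)) = 0.
Proof.
move=> vx; have := u_twist_parts I k; set E := uh_even _; set O := uh_odd _ => parts.
have half_sum (a : algC) : 2^-1 * (a + a) = a.
  by rewrite -mulr2n -[a *+ 2]mulr_natl mulKf ?pnatr_eq0.
have [[_ <-] [_ <-]] : acts_by (2^-1 *: (u_twist I k 0 + u_twist I k 1)) x /\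
                   acts_by (2^-1 *: (u_twist I k 0 - u_twist I k 1)) 0.
  have vN := acts_byZ (-1) (vx 1%N); rewrite scaleN1r mulN1r in vN.
  split; first by rewrite -[x]half_sum; apply/acts_byZ/acts_byD.
  by have := acts_byZ 2^-1 (acts_byD (vx 0%N) vN); rewrite subrr mulr0.
rewrite !parts expr0 expr1 scale1r scaleN1r addrACA subrr addr0 opprD opprK addrACA subrr.
by rewrite add0r -!mulr2n -!scaler_nat !scalerA mulVf ?pnatr_eq0 // !scale1r.
Qed.

End CharacterValues.

Section SModule.
Variables (r p n : nat) (t : 'I_p -> algC) (chi : Uh n -> algC).
Hypothesis rpn : (r + 2 * p)%N = n.
Hypothesis chiS : S_t0_char r t chi.

Local Notation G := (@blockW_gens n r p).
Local Notation acts_by := (acts_by G chi).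

Lemma S_t0_char_on : char_on G chi.
Proof. by case: chiS. Qed.

Lemma pair_lo_subproof (j : 'I_p) : (r + 2 * j < n)%N.
Proof. by rewrite -rpn; have := ltn_ord j; lia. Qed.

Lemma pair_hi_subproof (j : 'I_p) : ((r + 2 * j).+1 < n)%N.
Proof. by rewrite -rpn; have := ltn_ord j; lia. Qed.

Definition pair_lo (j : 'I_p) : 'I_n := Ordinal (pair_lo_subproof j).
Definition pair_hi (j : 'I_p) : 'I_n := Ordinal (pair_hi_subproof j).

Definition tail_vars (j : nat) : {set 'I_n} := [set i : 'I_n | (r + 2 * j <= i)%N].

Definition block_poly (j : 'I_p) : {poly algC} := 1 + (t j)%:P * 'X^2.

Definition tail_poly (j : nat) : {poly algC} := \prod_(i < p | (j <= i)%N) block_poly i.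

Lemma acts_by_u_twist_pair (j : 'I_p) b c :
  acts_by (u_twist [set pair_lo j; pair_hi j] b c) (block_poly j)`_b.
Proof.
have chiG := S_t0_char_on; set a := (r + 2 * j)%N; set s : algC := (-1) ^+ c.
have [_ _ _ /(_ j) [phi0_0 phi1_0 z0_0 z1'_t]] := chiS.
have genG g : [\/ g = phi0 n a, g = phi1 n a, g = z0 n a | g = z1' n a] -> G g.
  by move=> g_a; right; exists j.
have act_phi0 := acts_by_gen (genG _ (Or41 _ _ _ erefl)) phi0_0.
have act_phi1 := acts_by_gen (genG _ (Or42 _ _ _ erefl)) phi1_0.
have act_z0 := acts_by_gen (genG _ (Or43 _ _ _ erefl)) z0_0.
have act_z1' := acts_by_gen (genG _ (Or44 _ _ _ erefl)) z1'_t.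
rewrite /phi0 /phi1 /z0 /z1' (uh_xiN_ord (pair_lo j)) (uh_xiN_ord (pair_hi j))
  (uh_xN_ord (pair_lo j)) (uh_xN_ord (pair_hi j)) in act_phi0 act_phi1 act_z0 act_z1'.
rewrite u_twist_pair ?ltnSn // coefD coef1 coefCM coefXn -/s.
case: b => [|[|[|b]]] /=.
- by rewrite mulr0 addr0; exact: acts_by1.
- by have := acts_byD chiG act_z0 (acts_byZ chiG s act_phi0); rewrite !mulr0 !add0r.
- have := acts_byD chiG act_z1' (acts_byZ chiG (- s) act_phi1).
  by rewrite !mulr0 add0r mulr1 addr0 scaleNr.
- by rewrite mulr0 addr0; exact: acts_by0.
Qed.

Lemma tail_varsS (j : 'I_p) : tail_vars j = [set pair_lo j; pair_hi j] :|: tail_vars j.+1.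
Proof. by apply/setP => i; rewrite !inE -!val_eqE /=; lia. Qed.

Lemma before_pair_tail (j : 'I_p) : before [set pair_lo j; pair_hi j] (tail_vars j.+1).
Proof. by move=> i i'; rewrite !inE -!val_eqE /= => /orP[] /eqP->; lia. Qed.

Lemma tail_vars_last : tail_vars p = set0.
Proof. by apply/setP => i; rewrite !inE; have := ltn_ord i; lia. Qed.

Lemma setT_first_tail : [set: 'I_n] = first_vars n r :|: tail_vars 0.
Proof. by apply/setP => i; rewrite !inE muln0 addn0; case: ltnP. Qed.

Lemma before_first_tail : before (first_vars n r) (tail_vars 0).
Proof. by move=> i i'; rewrite !inE muln0 addn0; lia. Qed.

Lemma tail_poly_last : tail_poly p = 1.
Proof. by rewrite /tail_poly big_pred0 // => i; rewrite leqNgt ltn_ord. Qed.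

Lemma tail_polyS (j : 'I_p) : tail_poly j = block_poly j * tail_poly j.+1.
Proof.
rewrite /tail_poly (bigD1 j) //=; congr (_ * _).
by apply: eq_bigl => i; rewrite -val_eqE /=; lia.
Qed.

Lemma acts_by_u_twist_tail j b c : (j <= p)%N ->
  acts_by (u_twist (tail_vars j) b c) (tail_poly j)`_b.
Proof.
move=> le_jp; rewrite -(subKn le_jp).
elim: (p - j)%N (leq_subr j p) b c => [|d IHd] le_dp b c.
  rewrite subn0 tail_vars_last tail_poly_last u_twist_set0 coef1.
  by have := acts_byZ S_t0_char_on (b == 0)%:R (acts_by1 S_t0_char_on); rewrite mulr1.
have lt_jp : (p - d.+1 < p)%N by lia.
rewrite (_ : (p - d.+1)%N = Ordinal lt_jp) // tail_varsS tail_polyS coefM.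
rewrite u_twist_split; last exact: before_pair_tail.
apply: (acts_by_sum S_t0_char_on) => a _.
have -> : (Ordinal lt_jp).+1 = (p - d)%N by rewrite /=; lia.
by apply: (acts_byM S_t0_char_on); [exact: acts_by_u_twist_pair | apply: IHd; lia].
Qed.

Lemma acts_by_u_twist_first k c : acts_by (u_twist (first_vars n r) k c) (k == 0)%:R.
Proof.
have chiG := S_t0_char_on; have [_ chi_even chi_odd _] := chiS.
have act_even : acts_by (uh_even (u_on (first_vars n r) k)) (k == 0)%:R.
  apply: acts_by_gen; first by left; exists k; left.
  by rewrite chi_even ffunE cards0 u_on_twist u_twist_const_coef.
have act_odd : acts_by (uh_odd (u_on (first_vars n r) k)) 0.
  apply: acts_by_gen; first by left; exists k; right.
  by rewrite chi_odd ffunE cards0 raddf0.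
have := acts_byD chiG act_even (acts_byZ chiG ((-1) ^+ c) act_odd).
by rewrite mulr0 addr0 u_on_twist -u_twist_parts.
Qed.

Lemma acts_by_u_twist_setT k c : acts_by (u_twist [set: 'I_n] k c) (tail_poly 0)`_k.
Proof.
rewrite setT_first_tail u_twist_split; last exact: before_first_tail.
have -> : (tail_poly 0)`_k = \sum_(a < k.+1) (a == 0 :> nat)%:R * (tail_poly 0)`_(k - a)%N.
  by rewrite big_ord_recl mul1r subn0 big1 ?addr0 // => a _; rewrite mul0r.
apply: (acts_by_sum S_t0_char_on) => a _; apply: (acts_byM S_t0_char_on).
  exact: acts_by_u_twist_first.
exact: acts_by_u_twist_tail.
Qed.

End SModule.

Theorem lemma4p6 (r p n : nat) (t : 'I_p -> algC) (chi : Uh n -> algC) :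
  (r + 2 * p)%N = n ->
  (forall i : 'I_p, t i != 0) ->
  @S_t0_char n r p t chi ->
  forall k : nat, (1 <= k <= n)%N ->
    chi (@u1 n k) = 0 /\
    chi (@u0 n k) = (if odd k || (2 * p < k)%N then 0 else @esym_t p t k./2).
Proof.
move=> rpn _ chiS k _; rewrite /u1 /u0 u_on_twist.
have [-> ->] := acts_by_parts (S_t0_char_on chiS) (acts_by_u_twist_setT rpn chiS k).
by split=> //; rewrite -coef_prod_esym /tail_poly; under eq_bigl do rewrite leq0n.
Qed.
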